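(* Let $(X,\mathbb{A},d)$ be a complete $C^*$-algebra valued metric space, where $\mathbb{A}$ is a unital $C^*$-algebra. Let $T,S:X\to X$ be mappings such that $$d(T^n x,(ST)^n y)\preceq q(x,y)^n\,\delta(x,y)\quad\text{for all }x,y\in X,\ n\in\mathbb{N},$$ where $q:X\times X\to\acute{\mathbb{A}}_+$ satisfies $0\le\|q(x,y)\|<1$ for all $x,y\in X$ and $\delta:X\times X\to\mathbb{A}_+$ is a mapping, and $ST$ denotes the composition $S\circ T$. If $T$ and $ST$ are both orbitally continuous on $X$, then $T$ and $S$ have a unique common fixed point in $X$.
   Context: $\mathbb{A}$ denotes a unital $C^*$-algebra with unit $I$ and zero $\theta$. An element $a\in\mathbb{A}$ is positive, written $a\succeq\theta$, if $a^*=a$ and its spectrum is contained in $[0,\infty)$; $\mathbb{A}_+$ is the set of positive elements, and $a\succeq b$ means $a-b\succeq\theta$. $\acute{\mathbb{A}}_+$ denotes the set of positive elements of $\mathbb{A}$ that commute with every element of $\mathbb{A}$. A $C^*$-algebra valued metric space $(X,\mathbb{A},d)$ is a nonempty set $X$ with $d:X\times X\to\mathbb{A}$ such that for all $x,y,z\in X$: $d(x,y)\succeq\theta$, with $d(x,y)=\theta$ iff $x=y$; $d(x,y)=d(y,x)$; $d(x,y)\preceq d(x,z)+d(z,y)$. A sequence $\{x_n\}$ converges to $x$ if $\|d(x_n,x)\|\to0$, and is Cauchy if $\|d(x_n,x_m)\|\to0$ as $n,m\to\infty$; the space is complete if every Cauchy sequence converges to a point of $X$. A self-map $T$ of $X$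 is orbitally continuous at $u\in X$ if for every $x\in X$ and every increasing sequence of positive integers $\{n_i\}$, $\|d(T^{n_i}x,u)\|\to0$ implies $\|d(T^{n_i+1}x,Tu)\|\to0$ as $i\to\infty$; $T$ is orbitally continuous on $X$ if it is orbitally continuous at every $u\in X$. *)

From Stdlib Require Import Reals Lra.
Open Scope R_scope.

Definition C : Type := (R * R)%type.
Definition Cre (z : C) : R := fst z.
Definition Cim (z : C) : R := snd z.
Definition C1 : C := (1, 0).
Definition Cadd (z w : C) : C := (fst z + fst w, snd z + snd w).
Definition Cmul (z w : C) : C :=
  (fst z * fst w - snd z * snd w, fst z * snd w + snd z * fst w).
Definition Cconj (z : C) : C := (fst z, - snd z).
Definition Cmod (z : C) : R := sqrt (fst z * fst z + snd z * snd z).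

Record CstarAlg := {
  car :> Type;
  czero : car;
  cone : car;
  cadd : car -> car -> car;
  copp : car -> car;
  cmul : car -> car -> car;
  csmul : C -> car -> car;
  cstar : car -> car;
  cnorm : car -> R;
  cadd_assoc : forall a b c, cadd a (cadd b c) = cadd (cadd a b) c;
  cadd_comm : forall a b, cadd a b = cadd b a;
  cadd_0l : forall a, cadd czero a = a;
  cadd_oppl : forall a, cadd (copp a) a = czero;
  csmul_addl : forall (z w : C) a, csmul (Cadd z w) a = cadd (csmul z a) (csmul w a);
  csmul_addr : forall (z : C) a b, csmul z (cadd a b) = cadd (csmul z a) (csmul z b);
  csmul_mul : forall (z w : C) a, csmul (Cmul z w) a = csmul z (csmul w a);
  csmul_1 : forall a, csmul C1 a = a;
  cmul_assoc : forall a b c, cmul a (cmul b c) = cmul (cmul a b) c;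
  cmul_1l : forall a, cmul cone a = a;
  cmul_1r : forall a, cmul a cone = a;
  cmul_addl : forall a b c, cmul (cadd a b) c = cadd (cmul a c) (cmul b c);
  cmul_addr : forall a b c, cmul a (cadd b c) = cadd (cmul a b) (cmul a c);
  cmul_smull : forall (z : C) a b, cmul (csmul z a) b = csmul z (cmul a b);
  cmul_smulr : forall (z : C) a b, cmul a (csmul z b) = csmul z (cmul a b);
  cstar_add : forall a b, cstar (cadd a b) = cadd (cstar a) (cstar b);
  cstar_smul : forall (z : C) a, cstar (csmul z a) = csmul (Cconj z) (cstar a);
  cstar_mul : forall a b, cstar (cmul a b) = cmul (cstar b) (cstar a);
  cstar_invol : forall a, cstar (cstar a) = a;
  cnorm_eq0 : forall a, cnorm a = 0 -> a = czero;
  cnorm_triangle : forall a b, cnorm (cadd a b) <= cnorm a + cnorm b;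
  cnorm_smul : forall (z : C) a, cnorm (csmul z a) = Cmod z * cnorm a;
  cnorm_mul : forall a b, cnorm (cmul a b) <= cnorm a * cnorm b;
  cnorm_cstar : forall a, cnorm (cmul (cstar a) a) = cnorm a * cnorm a;
  ccomplete : forall u : nat -> car,
    (forall eps, eps > 0 -> exists N, forall n m, (n >= N)%nat -> (m >= N)%nat ->
        cnorm (cadd (u n) (copp (u m))) < eps) ->
    exists l, forall eps, eps > 0 -> exists N, forall n, (n >= N)%nat ->
        cnorm (cadd (u n) (copp l)) < eps
}.

Arguments czero {_}. Arguments cone {_}. Arguments cadd {_}. Arguments copp {_}.
Arguments cmul {_}. Arguments csmul {_}. Arguments cstar {_}. Arguments cnorm {_}.

Section CstarDefs.
Variable A : CstarAlg.

Definition csub (a b : A) : A := cadd a (copp b).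

Definition cinvertible (a : A) : Prop :=
  exists b : A, cmul a b = cone /\ cmul b a = cone.

Definition in_spectrum (a : A) (l : C) : Prop :=
  ~ cinvertible (csub a (csmul l cone)).

Definition cpos (a : A) : Prop :=
  cstar a = a /\ forall l : C, in_spectrum a l -> Cim l = 0 /\ 0 <= Cre l.

Definition cle (a b : A) : Prop := cpos (csub b a).

(** positive elements commuting with every element (the set \acute{A}_+) *)
Definition cpos_central (a : A) : Prop :=
  cpos a /\ forall b : A, cmul a b = cmul b a.

Fixpoint cpow (a : A) (n : nat) : A :=
  match n with O => cone | S k => cmul a (cpow a k) end.

End CstarDefs.

Arguments csub {_}. Arguments cinvertible {_}. Arguments in_spectrum {_}.
Arguments cpos {_}. Arguments cle {_}. Arguments cpos_central {_}. Arguments cpow {_}.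

Definition is_cmetric (A : CstarAlg) (X : Type) (d : X -> X -> A) : Prop :=
  (forall x y, cpos (d x y)) /\
  (forall x y, d x y = czero <-> x = y) /\
  (forall x y, d x y = d y x) /\
  (forall x y z, cle (d x y) (cadd (d x z) (d z y))).

Definition cm_converges {A : CstarAlg} {X : Type} (d : X -> X -> A)
  (u : nat -> X) (x : X) : Prop :=
  Un_cv (fun n => cnorm (d (u n) x)) 0.

Definition cm_cauchy {A : CstarAlg} {X : Type} (d : X -> X -> A)
  (u : nat -> X) : Prop :=
  forall eps, eps > 0 -> exists N, forall n m, (n >= N)%nat -> (m >= N)%nat ->
    cnorm (d (u n) (u m)) < eps.

Definition cm_complete {A : CstarAlg} {X : Type} (d : X -> X -> A) : Prop :=
  forall u : nat -> X, cm_cauchy d u -> exists x, cm_converges d u x.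

Definition orbitally_continuous_at {A : CstarAlg} {X : Type} (d : X -> X -> A)
  (T : X -> X) (u : X) : Prop :=
  forall (x : X) (ni : nat -> nat),
    (forall i, (ni i < ni (S i))%nat) ->
    Un_cv (fun i => cnorm (d (Nat.iter (ni i) T x) u)) 0 ->
    Un_cv (fun i => cnorm (d (Nat.iter (S (ni i)) T x) (T u))) 0.

Definition orbitally_continuous {A : CstarAlg} {X : Type} (d : X -> X -> A)
  (T : X -> X) : Prop :=
  forall u, orbitally_continuous_at d T u.

(** Starting from any [x], the contractive condition applied to the pairs [(x, x)] and
    [(T x, x)] bounds [d (T^n x) (T^(n+1) x)] by a geometric sequence, so the [T]-orbit of [x] is
    Cauchy; by orbital continuity its limit [u] is fixed by [T].  The [ST]-orbit of [x] shadows the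
    [T]-orbit, hence also converges to [u], and [S (T u) = u].  Two common fixed points [u], [v]
    satisfy [d u v = d (T^n u) ((ST)^n v) <= q^n delta] for every [n], so [u = v].

    Passing from the order of [A] to norms needs [0 <= a <= b -> |a| <= |b|].  With positivity
    defined spectrally, this reduces to bounding the norm of a self-adjoint element by its spectral
    radius, which we prove by Rickart's elementary argument: the inverses of [1 - (l k)^(2^j)] are
    averages of resolvents over roots of unity, hence uniformly Lipschitz in [l], while the
    C*-identity gives [|k^(2^j)| = |k|^(2^j)]. *)

From Stdlib Require Import Reals Lra Lia Classical ClassicalEpsilon.
From Coquelicot Require Compactness.
Open Scope R_scope.

Arguments cadd_assoc {_}. Arguments cadd_comm {_}. Arguments cadd_0l {_}.
Arguments cadd_oppl {_}. Arguments csmul_addl {_}. Arguments csmul_addr {_}.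
Arguments csmul_mul {_}. Arguments csmul_1 {_}. Arguments cmul_assoc {_}.
Arguments cmul_1l {_}. Arguments cmul_1r {_}. Arguments cmul_addl {_}.
Arguments cmul_addr {_}. Arguments cmul_smull {_}. Arguments cmul_smulr {_}.
Arguments cstar_add {_}. Arguments cstar_smul {_}. Arguments cstar_mul {_}.
Arguments cstar_invol {_}. Arguments cnorm_eq0 {_}. Arguments cnorm_triangle {_}.
Arguments cnorm_smul {_}. Arguments cnorm_mul {_}. Arguments cnorm_cstar {_}.
Arguments ccomplete {_}.

Definition Cmk (r : R) : C := (r, 0).
Definition Copp (z : C) : C := (- fst z, - snd z).
Definition Csub (z w : C) : C := Cadd z (Copp w).
Definition Cinv (z : C) : C :=
  (fst z / (fst z * fst z + snd z * snd z), - snd z / (fst z * fst z + snd z * snd z)).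
Fixpoint Cpow (z : C) (n : nat) : C :=
  match n with O => C1 | S k => Cmul z (Cpow z k) end.

Lemma Cpair_eq (a b c d : R) : a = c -> b = d -> (a, b) = (c, d).
Proof. now intros -> ->. Qed.

Lemma Cmod_ge0 z : 0 <= Cmod z.
Proof. apply sqrt_pos. Qed.

Lemma Cmod_sq z : Cmod z * Cmod z = fst z * fst z + snd z * snd z.
Proof. apply sqrt_sqrt; nra. Qed.

Lemma Cmod_unique z m : 0 <= m -> m * m = fst z * fst z + snd z * snd z -> Cmod z = m.
Proof. intros Hm Hsq. unfold Cmod. rewrite <- Hsq. now apply sqrt_square. Qed.

Lemma Cmod_mk r : Cmod (Cmk r) = Rabs r.
Proof.
  apply Cmod_unique; [apply Rabs_pos|]. simpl.
  rewrite <- Rabs_mult, Rabs_right; nra.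
Qed.

Lemma Cmod_0 : Cmod (0, 0) = 0.
Proof. apply Cmod_unique; simpl; lra. Qed.

Lemma Cmod_C1 : Cmod C1 = 1.
Proof. apply Cmod_unique; simpl; lra. Qed.

Lemma Cmod_mul z w : Cmod (Cmul z w) = Cmod z * Cmod w.
Proof.
  apply Cmod_unique; [apply Rmult_le_pos; apply Cmod_ge0|].
  replace (Cmod z * Cmod w * (Cmod z * Cmod w))
    with ((Cmod z * Cmod z) * (Cmod w * Cmod w)) by ring.
  rewrite !Cmod_sq. destruct z, w; simpl; ring.
Qed.

Lemma Cmod_pos z : z <> (0, 0) -> 0 < Cmod z.
Proof.
  intro Hz. destruct (Cmod_ge0 z) as [H|H]; auto. exfalso; apply Hz.
  pose proof (Cmod_sq z) as Hs. rewrite <- H in Hs.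
  destruct z as [x y]; simpl in *. apply Cpair_eq; nra.
Qed.

Lemma Cmod_triangle z w : Cmod (Cadd z w) <= Cmod z + Cmod w.
Proof.
  pose proof (Cmod_ge0 z); pose proof (Cmod_ge0 w).
  apply Rsqr_incr_0_var; [|lra]. unfold Rsqr. rewrite Cmod_sq.
  replace ((Cmod z + Cmod w) * (Cmod z + Cmod w))
    with (Cmod z * Cmod z + Cmod w * Cmod w + 2 * (Cmod z * Cmod w)) by ring.
  rewrite !Cmod_sq. destruct z as [a b], w as [c d]; simpl.
  pose proof (sqrt_cauchy a b c d) as Hc. unfold Cmod, Rsqr in *; simpl in *. nra.
Qed.

Lemma Cmod_le_abs (a b : R) : Cmod (a, b) <= Rabs a + Rabs b.
Proof.
  pose proof (Cmod_sq (a, b)); pose proof (Cmod_ge0 (a, b)); simpl in *.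
  pose proof (Rabs_pos a); pose proof (Rabs_pos b).
  assert (Rabs a * Rabs a = a * a) by (rewrite <- Rabs_mult; apply Rabs_right; nra).
  assert (Rabs b * Rabs b = b * b) by (rewrite <- Rabs_mult; apply Rabs_right; nra).
  nra.
Qed.

Lemma Cmod_sub_lt (x1 x2 u v e : R) :
  Rabs (x1 - u) < e -> Rabs (x2 - v) < e -> Cmod (Csub (x1, x2) (u, v)) < 2 * e.
Proof.
  intros H1 H2. unfold Csub, Cadd, Copp; simpl.
  eapply Rle_lt_trans; [apply Cmod_le_abs|]. unfold Rminus in *. lra.
Qed.

Lemma Cmod_fst_bound (a b : R) : - Cmod (a, b) <= a <= Cmod (a, b).
Proof. pose proof (Cmod_sq (a, b)); pose proof (Cmod_ge0 (a, b)); simpl in *. split; nra. Qed.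

Lemma Cmod_snd_bound (a b : R) : - Cmod (a, b) <= b <= Cmod (a, b).
Proof. pose proof (Cmod_sq (a, b)); pose proof (Cmod_ge0 (a, b)); simpl in *. split; nra. Qed.

Lemma Cmul_comm z w : Cmul z w = Cmul w z.
Proof. destruct z, w; unfold Cmul; simpl; apply Cpair_eq; ring. Qed.

Lemma Cmul_inv z : z <> (0, 0) -> Cmul z (Cinv z) = C1.
Proof.
  intro H. destruct z as [x y]. assert (x * x + y * y <> 0).
  { intro E. apply H. apply Cpair_eq; nra. }
  unfold Cmul, Cinv, C1; simpl. apply Cpair_eq; field; auto.
Qed.

Lemma Cmod_inv z : z <> (0, 0) -> Cmod (Cinv z) = / Cmod z.
Proof.
  intro H. pose proof (Cmod_pos z H).
  assert (Cmod z * Cmod (Cinv z) = 1) by (rewrite <- Cmod_mul, Cmul_inv by auto; exact Cmod_C1).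
  field_simplify_eq; lra.
Qed.

Lemma Csub_mul_l z l m : Csub (Cmul z l) (Cmul z m) = Cmul z (Csub l m).
Proof. destruct z, l, m; unfold Cmul, Csub, Cadd, Copp; simpl; apply Cpair_eq; ring. Qed.

Lemma Csub_mul_r z l : Csub l (Cmul z l) = Cmul (Csub C1 z) l.
Proof. destruct z, l; unfold Cmul, Csub, Cadd, Copp, C1; simpl; apply Cpair_eq; ring. Qed.

Lemma Cpow_mul z w n : Cpow (Cmul z w) n = Cmul (Cpow z n) (Cpow w n).
Proof.
  induction n; simpl; [unfold Cmul, C1; simpl; apply Cpair_eq; ring|].
  rewrite IHn. destruct z, w, (Cpow (r, r0) n), (Cpow (r1, r2) n).
  unfold Cmul; simpl; apply Cpair_eq; ring.
Qed.

Lemma Cpow_mk r n : Cpow (Cmk r) n = Cmk (r ^ n).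
Proof. induction n; simpl; [reflexivity|]. rewrite IHn. unfold Cmul, Cmk; simpl; apply Cpair_eq; ring. Qed.

Definition zeta (j : nat) : C := (cos (PI / 2 ^ j), sin (PI / 2 ^ j)).

Lemma Cmod_zeta j : Cmod (zeta j) = 1.
Proof. apply Cmod_unique; [lra|]. unfold zeta; simpl. pose proof (sin2_cos2 (PI / 2 ^ j)). unfold Rsqr in H. lra. Qed.

Lemma Cmod_zeta_mul j z : Cmod (Cmul (zeta j) z) = Cmod z.
Proof. rewrite Cmod_mul, Cmod_zeta; ring. Qed.

Lemma Cpow_cis t n : Cpow (cos t, sin t) n = (cos (INR n * t), sin (INR n * t)).
Proof.
  induction n; simpl Cpow.
  - now rewrite Rmult_0_l, cos_0, sin_0.
  - rewrite IHn, S_INR. unfold Cmul; simpl.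
    replace ((INR n + 1) * t) with (t + INR n * t) by ring. rewrite cos_plus, sin_plus.
    apply Cpair_eq; ring.
Qed.

Lemma zeta_pow j : Cpow (zeta j) (2 ^ j) = Cmk (-1).
Proof.
  unfold zeta. rewrite Cpow_cis, pow_INR.
  replace (INR 2 ^ j * (PI / 2 ^ j)) with PI; [now rewrite cos_PI, sin_PI|].
  replace (INR 2) with 2 by (simpl; ring). field. apply pow_nonzero. lra.
Qed.

Lemma cos_ge_1_sub_sq t : 0 <= t <= PI / 2 -> 1 - t * t / 2 <= cos t.
Proof.
  intros Ht. pose proof PI_4. eapply Rle_trans; [|apply COS; lra].
  unfold cos_lb, cos_approx, cos_term; simpl.
  assert (t * t * t * t * (30 - t * t) >= 0).
  { replace (t * t * t * t) with ((t * t) * (t * t)) by ring. apply Rle_ge, Rmult_le_pos; nra. }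
  lra.
Qed.

Lemma Cmod_sub_zeta j : (1 <= j)%nat -> Cmod (Csub C1 (zeta j)) <= PI / 2 ^ j.
Proof.
  intro Hj. set (t := PI / 2 ^ j). pose proof PI_4. pose proof PI_RGT_0.
  assert (Ht0 : 0 < t) by (apply Rdiv_lt_0_compat; [lra | apply pow_lt; lra]).
  assert (Ht1 : t <= PI / 2).
  { apply Rmult_le_compat_l; [lra|]. apply Rinv_le_contravar; [lra|].
    destruct j; [lia|]. simpl. pose proof (pow_R1_Rle 2 j ltac:(lra)). lra. }
  pose proof (cos_ge_1_sub_sq t ltac:(lra)).
  pose proof (Cmod_sq (Csub C1 (zeta j))) as Hs; pose proof (Cmod_ge0 (Csub C1 (zeta j))).
  unfold Csub, Cadd, Copp, C1, zeta in Hs |- *; simpl in Hs |- *. fold t in Hs |- *.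
  pose proof (sin2_cos2 t). unfold Rsqr in *. nra.
Qed.

Lemma exists_zeta_near_1 eps : 0 < eps -> exists j, Cmod (Csub C1 (zeta j)) < eps.
Proof.
  intro He. pose proof PI_RGT_0.
  destruct (pow_lt_1_zero (1 / 2) ltac:(rewrite Rabs_right; lra) (eps / PI)) as [N HN].
  { apply Rdiv_lt_0_compat; lra. }
  exists (S N). eapply Rle_lt_trans; [apply Cmod_sub_zeta; lia|].
  specialize (HN (S N) ltac:(lia)). rewrite Rabs_right in HN by (apply Rle_ge, pow_le; lra).
  replace (PI / 2 ^ S N) with (PI * (1 / 2) ^ S N) by (unfold Rdiv; now rewrite Rmult_1_l, pow_inv).
  apply (Rmult_lt_reg_r (/ PI)); [apply Rinv_0_lt_compat; lra|].
  replace (PI * (1 / 2) ^ S N * / PI) with ((1 / 2) ^ S N) by (field; lra). exact HN.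
Qed.

Section Algebra.
Context {A : CstarAlg}.
Implicit Types a b c x y : A.

Lemma cadd_0r a : cadd a czero = a.
Proof. rewrite cadd_comm; apply cadd_0l. Qed.

Lemma cadd_oppr a : cadd a (copp a) = czero.
Proof. rewrite cadd_comm; apply cadd_oppl. Qed.

Lemma cadd_cancel_l c a b : cadd c a = cadd c b -> a = b.
Proof.
  intro H. rewrite <- (cadd_0l a), <- (cadd_0l b), <- (cadd_oppl c), <- !cadd_assoc, H.
  reflexivity.
Qed.

Lemma copp_unique a b : cadd a b = czero -> b = copp a.
Proof. intro H. apply (cadd_cancel_l a). now rewrite H, cadd_oppr. Qed.

Lemma copp_opp a : copp (copp a) = a.
Proof. symmetry; apply copp_unique, cadd_oppl. Qed.

Lemma copp_0 : copp (@czero A) = czero.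
Proof. symmetry; apply copp_unique, cadd_0l. Qed.

Lemma copp_add a b : copp (cadd a b) = cadd (copp a) (copp b).
Proof.
  symmetry; apply copp_unique.
  rewrite (cadd_comm (copp a)), cadd_assoc, <- (cadd_assoc a b), cadd_oppr, cadd_0r.
  apply cadd_oppr.
Qed.

Lemma cadd_swap a b c : cadd (cadd a b) c = cadd (cadd a c) b.
Proof. now rewrite <- !cadd_assoc, (cadd_comm b c). Qed.

Lemma csub_diag a : csub a a = czero.
Proof. apply cadd_oppr. Qed.

Lemma csub_0r a : csub a czero = a.
Proof. unfold csub; now rewrite copp_0, cadd_0r. Qed.

Lemma csub_eq0 a b : csub a b = czero -> a = b.
Proof. intro H. rewrite <- (copp_opp a), <- (copp_unique _ _ H). apply copp_opp. Qed.

Lemma copp_csub a b : copp (csub a b) = csub b a.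
Proof. unfold csub. now rewrite copp_add, copp_opp, cadd_comm. Qed.

Lemma csub_opp a b : csub a (copp b) = cadd a b.
Proof. unfold csub; now rewrite copp_opp. Qed.

Lemma csub_opp2 a b : csub (copp a) (copp b) = csub b a.
Proof. now rewrite csub_opp, cadd_comm. Qed.

Lemma csub_subK a b : csub a (csub a b) = b.
Proof. unfold csub. now rewrite copp_add, copp_opp, cadd_assoc, cadd_oppr, cadd_0l. Qed.

Lemma csub_tele a b c : cadd (csub a b) (csub b c) = csub a c.
Proof. unfold csub. now rewrite cadd_assoc, <- (cadd_assoc a (copp b) b), cadd_oppl, cadd_0r. Qed.

Lemma csub_swap a b c : csub (csub a b) c = csub (csub a c) b.
Proof. apply cadd_swap. Qed.

Lemma csub_add_sub_sub a b c d : csub (csub (cadd a b) c) (csub b (csub c d)) = csub a d.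
Proof.
  unfold csub. rewrite copp_add, copp_opp, cadd_assoc, (cadd_swap (cadd a b) (copp c) (copp b)).
  rewrite <- (cadd_assoc a b (copp b)), cadd_oppr, cadd_0r, cadd_assoc.
  now rewrite <- (cadd_assoc a (copp c) c), cadd_oppl, cadd_0r.
Qed.

Lemma csub_addl a b c : csub (cadd a b) c = cadd (csub a c) b.
Proof. unfold csub. now rewrite cadd_swap. Qed.

Lemma csub_add2 a b c d : csub (cadd a b) (cadd c d) = cadd (csub a c) (csub b d).
Proof.
  unfold csub. rewrite copp_add, <- !cadd_assoc. f_equal.
  rewrite !cadd_assoc. f_equal. apply cadd_comm.
Qed.

Lemma csub_addK a b : cadd (csub a b) b = a.
Proof. unfold csub. now rewrite <- cadd_assoc, cadd_oppl, cadd_0r. Qed.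

Lemma csub_add_mid a b c : csub (cadd a b) (cadd b c) = csub a c.
Proof. rewrite (cadd_comm a b), csub_add2, csub_diag. apply cadd_0l. Qed.

Lemma csub_sub2r a b c : csub (csub a b) (csub c b) = csub a c.
Proof. now rewrite <- (copp_csub b c), csub_opp, csub_tele. Qed.

Lemma csub_sub2l a b c : csub (csub c b) (csub c a) = csub a b.
Proof. now rewrite <- (copp_csub a c), csub_opp, cadd_comm, csub_tele. Qed.

Lemma cmul_0l a : cmul czero a = czero.
Proof. apply (cadd_cancel_l (cmul czero a)). now rewrite <- cmul_addl, cadd_0l, cadd_0r. Qed.

Lemma cmul_0r a : cmul a czero = czero.
Proof. apply (cadd_cancel_l (cmul a czero)). now rewrite <- cmul_addr, cadd_0l, cadd_0r. Qed.

Lemma cmul_oppl a b : cmul (copp a) b = copp (cmul a b).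
Proof. apply copp_unique. now rewrite <- cmul_addl, cadd_oppr, cmul_0l. Qed.

Lemma cmul_oppr a b : cmul a (copp b) = copp (cmul a b).
Proof. apply copp_unique. now rewrite <- cmul_addr, cadd_oppr, cmul_0r. Qed.

Lemma cmul_subl a b c : cmul (csub a b) c = csub (cmul a c) (cmul b c).
Proof. unfold csub; now rewrite cmul_addl, cmul_oppl. Qed.

Lemma cmul_subr a b c : cmul a (csub b c) = csub (cmul a b) (cmul a c).
Proof. unfold csub; now rewrite cmul_addr, cmul_oppr. Qed.

Lemma csmul_0l a : csmul (0, 0) a = czero.
Proof.
  apply (cadd_cancel_l (csmul (0, 0) a)). rewrite <- csmul_addl, cadd_0r.
  f_equal. unfold Cadd; simpl; apply Cpair_eq; ring.
Qed.

Lemma csmul_0r z : csmul z (@czero A) = czero.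
Proof. apply (cadd_cancel_l (csmul z czero)). now rewrite <- csmul_addr, !cadd_0r. Qed.

Lemma csmul_oppl z a : csmul (Copp z) a = copp (csmul z a).
Proof.
  apply copp_unique. rewrite <- csmul_addl.
  replace (Cadd z (Copp z)) with ((0, 0) : C) by (unfold Cadd, Copp; simpl; apply Cpair_eq; ring).
  apply csmul_0l.
Qed.

Lemma csmul_oppr z a : csmul z (copp a) = copp (csmul z a).
Proof. apply copp_unique. now rewrite <- csmul_addr, cadd_oppr, csmul_0r. Qed.

Lemma csmul_m1 a : csmul (Cmk (-1)) a = copp a.
Proof.
  replace (Cmk (-1)) with (Copp C1) by (unfold Copp, Cmk, C1; simpl; apply Cpair_eq; ring).
  now rewrite csmul_oppl, csmul_1.
Qed.

Lemma csmul_subl z w a : csmul (Csub z w) a = csub (csmul z a) (csmul w a).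
Proof. unfold Csub, csub; now rewrite csmul_addl, csmul_oppl. Qed.

Lemma csmul_subr z a b : csmul z (csub a b) = csub (csmul z a) (csmul z b).
Proof. unfold csub; now rewrite csmul_addr, csmul_oppr. Qed.

Lemma cadd_diag a : cadd a a = csmul (Cmk 2) a.
Proof.
  replace (Cmk 2) with (Cadd C1 C1) by (unfold Cadd, C1, Cmk; simpl; apply Cpair_eq; ring).
  now rewrite csmul_addl, csmul_1.
Qed.

Lemma csmul_half_2 a : csmul (Cmk (1 / 2)) (csmul (Cmk 2) a) = a.
Proof.
  rewrite <- csmul_mul. replace (Cmul (Cmk (1 / 2)) (Cmk 2)) with C1; [apply csmul_1|].
  unfold Cmul, Cmk, C1; simpl; apply Cpair_eq; field.
Qed.

Lemma cnorm_0 : cnorm (@czero A) = 0.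
Proof. now rewrite <- (csmul_0l czero), cnorm_smul, Cmod_0, Rmult_0_l. Qed.

Lemma cnorm_opp a : cnorm (copp a) = cnorm a.
Proof.
  rewrite <- csmul_m1, cnorm_smul, Cmod_mk, Rabs_left by lra. ring.
Qed.

Lemma cnorm_ge0 a : 0 <= cnorm a.
Proof. pose proof (cnorm_triangle a (copp a)). rewrite cadd_oppr, cnorm_0, cnorm_opp in H. lra. Qed.

Lemma cnorm_csub_sym a b : cnorm (csub a b) = cnorm (csub b a).
Proof. now rewrite <- cnorm_opp, copp_csub. Qed.

Lemma cnorm_sub_le a b : cnorm (csub a b) <= cnorm a + cnorm b.
Proof. unfold csub. rewrite <- (cnorm_opp b). apply cnorm_triangle. Qed.

Lemma cnorm_mul3 a b c : cnorm (cmul a (cmul b c)) <= cnorm a * cnorm b * cnorm c.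
Proof.
  eapply Rle_trans; [apply cnorm_mul|]. rewrite Rmult_assoc.
  apply Rmult_le_compat_l; [apply cnorm_ge0 | apply cnorm_mul].
Qed.

Lemma cstar_one : cstar (@cone A) = cone.
Proof.
  rewrite <- (cmul_1r (cstar cone)).
  rewrite <- (cstar_invol (cmul (cstar cone) cone)), cstar_mul, cstar_invol, cmul_1r.
  apply cstar_invol.
Qed.

Lemma cnorm_one : cnorm (@cone A) <= 1.
Proof.
  pose proof (cnorm_cstar (@cone A)) as H. rewrite cstar_one, cmul_1l in H.
  pose proof (cnorm_ge0 (@cone A)). nra.
Qed.

Lemma cnorm_smul_one z : cnorm (csmul z (@cone A)) <= Cmod z.
Proof. rewrite cnorm_smul. pose proof (@cnorm_one). pose proof (Cmod_ge0 z). nra. Qed.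

Lemma cstar_0 : cstar (@czero A) = czero.
Proof. apply (cadd_cancel_l (cstar czero)). now rewrite <- cstar_add, !cadd_0r. Qed.

Lemma cstar_opp a : cstar (copp a) = copp (cstar a).
Proof. apply copp_unique. now rewrite <- cstar_add, cadd_oppr, cstar_0. Qed.

Lemma cstar_sub a b : cstar (csub a b) = csub (cstar a) (cstar b).
Proof. unfold csub; now rewrite cstar_add, cstar_opp. Qed.

Lemma cstar_real r : cstar (csmul (Cmk r) (@cone A)) = csmul (Cmk r) cone.
Proof. rewrite cstar_smul, cstar_one. f_equal. unfold Cconj, Cmk; simpl; apply Cpair_eq; ring. Qed.

Lemma cpow_1 x : cpow x 1 = x.
Proof. apply cmul_1r. Qed.

Lemma cpow_add x n m : cpow x (n + m) = cmul (cpow x n) (cpow x m).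
Proof. induction n; simpl; [now rewrite cmul_1l | now rewrite IHn, cmul_assoc]. Qed.

Lemma cpow_comm x n : cmul (cpow x n) x = cmul x (cpow x n).
Proof. rewrite <- (cpow_1 x) at 2 3. rewrite <- !cpow_add. f_equal. lia. Qed.

Lemma cnorm_cpow x n : cnorm (cpow x n) <= cnorm x ^ n.
Proof.
  induction n; simpl; [apply cnorm_one|].
  eapply Rle_trans; [apply cnorm_mul|]. apply Rmult_le_compat_l; auto using cnorm_ge0.
Qed.

Lemma cpow_smul (l : C) x n : cpow (csmul l x) n = csmul (Cpow l n) (cpow x n).
Proof.
  induction n; simpl; [now rewrite csmul_1|].
  now rewrite IHn, cmul_smull, cmul_smulr, csmul_mul.
Qed.

Lemma cnorm_cpow2_sa (k : A) j : cstar k = k ->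
  cstar (cpow k (2 ^ j)) = cpow k (2 ^ j) /\ cnorm (cpow k (2 ^ j)) = cnorm k ^ (2 ^ j).
Proof.
  intro Hk. induction j as [|j [H1 H2]]; simpl; [rewrite cmul_1r, Hk; split; auto; ring|].
  rewrite Nat.add_0_r, cpow_add, pow_add. split.
  - now rewrite cstar_mul, H1.
  - now rewrite <- H1 at 1; rewrite cnorm_cstar, H2.
Qed.

Lemma cinvertible_one : cinvertible (@cone A).
Proof. exists cone; now rewrite cmul_1l. Qed.

Lemma cinvertible_opp a : cinvertible a -> cinvertible (copp a).
Proof.
  intros [b [H1 H2]]. exists (copp b).
  now rewrite cmul_oppl, cmul_oppr, copp_opp, cmul_oppr, cmul_oppl, copp_opp.
Qed.

Lemma cinvertible_smul z a : z <> (0, 0) -> cinvertible a -> cinvertible (csmul z a).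
Proof.
  intros Hz [b [H1 H2]]. exists (csmul (Cinv z) b).
  rewrite !cmul_smull, !cmul_smulr, <- !csmul_mul, H1, H2, Cmul_inv, Cmul_comm, Cmul_inv by auto.
  now rewrite csmul_1.
Qed.

Lemma cinv_unique a b c : cmul a b = cone -> cmul c a = cone -> b = c.
Proof. intros H1 H2. now rewrite <- (cmul_1l b), <- H2, <- cmul_assoc, H1, cmul_1r. Qed.

End Algebra.

Lemma Un_cv_const c : Un_cv (fun _ => c) c.
Proof. intros eps He. exists O. intros n _. now rewrite R_dist_eq. Qed.

Lemma Un_cv_0_plus (a b : nat -> R) : Un_cv a 0 -> Un_cv b 0 -> Un_cv (fun n => a n + b n) 0.
Proof. intros Ha Hb. rewrite <- (Rplus_0_r 0). now apply CV_plus. Qed.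

Lemma Un_cv_0_scal c (a : nat -> R) : Un_cv a 0 -> Un_cv (fun n => c * a n) 0.
Proof. intro Ha. rewrite <- (Rmult_0_r c). apply CV_mult; [apply Un_cv_const | exact Ha]. Qed.

Lemma Un_cv_geometric c r : 0 <= r < 1 -> Un_cv (fun n => c * r ^ n) 0.
Proof.
  intros Hr. apply Un_cv_0_scal. intros eps He.
  destruct (pow_lt_1_zero r ltac:(rewrite Rabs_right; lra) eps He) as [N HN]. exists N. intros n Hn. unfold R_dist. rewrite Rminus_0_r. now apply HN.
Qed.

Lemma Un_cv_0_squeeze (a b c : nat -> R) :
  (forall n, (1 <= n)%nat -> 0 <= a n <= b n + c n) -> Un_cv b 0 -> Un_cv c 0 -> Un_cv a 0.
Proof.
  intros H Hb Hc eps He.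
  destruct (Un_cv_0_plus b c Hb Hc eps He) as [N HN]. exists (S N). intros n Hn.
  specialize (HN n ltac:(lia)). specialize (H n ltac:(lia)).
  unfold R_dist in *. rewrite Rminus_0_r in *.
  rewrite Rabs_right by lra. pose proof (Rle_abs (b n + c n)). lra.
Qed.

Lemma Un_cv_0_bound_eq0 (x : R) (a : nat -> R) :
  Un_cv a 0 -> (forall n, (1 <= n)%nat -> 0 <= x <= a n) -> x = 0.
Proof.
  intros Ha Hx. destruct (Hx 1%nat (le_n _)) as [[Hpos|]_]; auto. exfalso.
  destruct (Ha x Hpos) as [N HN]. specialize (HN (S N) ltac:(lia)). specialize (Hx (S N) ltac:(lia)).
  unfold R_dist in HN. rewrite Rminus_0_r, Rabs_right in HN; lra.
Qed.

Lemma Un_cv_shift (a : nat -> R) l : Un_cv a l -> Un_cv (fun n => a (S n)) l.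
Proof. intros H eps He. destruct (H eps He) as [N HN]. exists N. intros n Hn. apply HN. lia. Qed.

Lemma pow_le_decr r m n : 0 <= r <= 1 -> (m <= n)%nat -> r ^ n <= r ^ m.
Proof.
  intros Hr Hmn. replace n with ((n - m) + m)%nat by lia. rewrite pow_add.
  pose proof (pow_le r m (proj1 Hr)). pose proof (pow_incr r 1 (n - m) Hr). rewrite pow1 in H0. nra.
Qed.

Lemma geometric_le c r1 r n : 0 <= c -> 0 <= r1 <= r -> c * r1 ^ n <= c * r ^ n.
Proof. intros Hc Hr. apply Rmult_le_compat_l; auto. now apply pow_incr. Qed.

Definition is_pseudometric {T : Type} (D : T -> T -> R) : Prop :=
  (forall x, D x x = 0) /\ (forall x y, D x y = D y x) /\
  (forall x y z, D x z <= D x y + D y z).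

Section GeometricSteps.
Variables (T : Type) (D : T -> T -> R).
Hypothesis HD : is_pseudometric D.

Variables (u : nat -> T) (C r : R).
Hypothesis Hr : 0 <= r < 1.
Hypothesis Hsteps : forall n, D (u n) (u (S n)) <= C * r ^ n.

Lemma geometric_steps_dist n p : D (u n) (u (p + n)) <= C / (1 - r) * (r ^ n - r ^ (p + n)).
Proof.
  destruct HD as (D_self & _ & D_triangle).
  induction p; simpl.
  - rewrite D_self. right; ring.
  - eapply Rle_trans; [apply (D_triangle _ (u (p + n)))|].
    eapply Rle_trans; [apply Rplus_le_compat; [apply IHp | apply Hsteps]|].
    right. simpl. field. lra.
Qed.

Lemma steps_factor_ge0 : 0 <= C / (1 - r).
Proof.
  destruct HD as (D_self & D_sym & D_triangle).
  pose proof (Hsteps 0) as H0; pose proof (D_triangle (u 0) (u 1) (u 0)).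
  rewrite D_self, (D_sym (u 1)) in *. simpl in H0.
  apply Rmult_le_pos; [lra | left; apply Rinv_0_lt_compat; lra].
Qed.

Lemma geometric_steps_bound n p : D (u n) (u (p + n)) <= C / (1 - r) * r ^ n.
Proof.
  eapply Rle_trans; [apply geometric_steps_dist|]. apply Rmult_le_compat_l; [apply steps_factor_ge0|].
  pose proof (pow_le r (p + n) (proj1 Hr)). lra.
Qed.

Lemma geometric_steps_cauchy : forall eps, eps > 0 -> exists N, forall n m,
  (n >= N)%nat -> (m >= N)%nat -> D (u n) (u m) < eps.
Proof.
  intros eps He. destruct (Un_cv_geometric (C / (1 - r)) r Hr eps He) as [N HN].
  specialize (HN N (le_n _)). unfold R_dist in HN. rewrite Rminus_0_r in HN.
  assert (Hle : forall n m, (N <= n <= m)%nat -> D (u n) (u m) < eps).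
  { intros n m Hnm. replace m with ((m - n) + n)%nat by lia.
    eapply Rle_lt_trans; [apply geometric_steps_bound|].
    eapply Rle_lt_trans; [|eapply Rle_lt_trans; [apply Rle_abs | exact HN]].
    apply Rmult_le_compat_l; [apply steps_factor_ge0 | apply pow_le_decr; [lra | lia]]. }
  exists N. intros n m Hn Hm. destruct (Nat.le_ge_cases n m).
  - apply Hle; lia.
  - rewrite (proj1 (proj2 HD)). apply Hle; lia.
Qed.

End GeometricSteps.

(** * Neumann series and perturbation of invertible elements *)

Section Limits.
Context {A : CstarAlg}.
Implicit Types a b c x y : A.

Definition climit (u : nat -> A) (l : A) : Prop := Un_cv (fun n => cnorm (csub (u n) l)) 0.

Lemma climit_of_cauchy (u : nat -> A) :
  (forall eps, eps > 0 -> exists N, forall n m, (n >= N)%nat -> (m >= N)%nat ->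
     cnorm (csub (u n) (u m)) < eps) -> exists l, climit u l.
Proof.
  intro Hu. destruct (ccomplete u Hu) as [l Hl]. exists l. intros eps He.
  destruct (Hl eps He) as [N HN]. exists N. intros n Hn. unfold R_dist.
  rewrite Rminus_0_r, Rabs_right by apply Rle_ge, cnorm_ge0. now apply HN.
Qed.

Lemma climit_unique (u : nat -> A) l l' : climit u l -> climit u l' -> l = l'.
Proof.
  intros Hl Hl'. apply csub_eq0, cnorm_eq0.
  apply (Un_cv_0_bound_eq0 _ _ (Un_cv_0_plus _ _ Hl Hl')). intros n _. split; [apply cnorm_ge0|].
  rewrite <- (csub_sub2r l (u n) l'), (cnorm_csub_sym (u n) l), (cnorm_csub_sym (u n) l').
  apply cnorm_sub_le.
Qed.

Lemma climit_cmul_l a (u : nat -> A) l : climit u l -> climit (fun n => cmul a (u n)) (cmul a l).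
Proof.
  intro Hl. apply (Un_cv_0_squeeze _ (fun n => cnorm a * cnorm (csub (u n) l)) (fun _ => 0));
    [|apply (Un_cv_0_scal (cnorm a) _ Hl) | apply Un_cv_const].
  intros n _. rewrite <- cmul_subr, Rplus_0_r. split; [apply cnorm_ge0 | apply cnorm_mul].
Qed.

Lemma climit_cmul_r a (u : nat -> A) l : climit u l -> climit (fun n => cmul (u n) a) (cmul l a).
Proof.
  intro Hl. apply (Un_cv_0_squeeze _ (fun n => cnorm a * cnorm (csub (u n) l)) (fun _ => 0));
    [|apply (Un_cv_0_scal (cnorm a) _ Hl) | apply Un_cv_const].
  intros n _. rewrite <- cmul_subl, Rplus_0_r, Rmult_comm. split; [apply cnorm_ge0 | apply cnorm_mul].
Qed.

Lemma climit_cnorm_le (u : nat -> A) l M : climit u l -> (forall n, cnorm (u n) <= M) -> cnorm l <= M.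
Proof.
  intros Hl HM. apply le_epsilon. intros eps He. destruct (Hl eps He) as [N HN].
  specialize (HN N (le_n _)). unfold R_dist in HN. rewrite Rminus_0_r in HN.
  rewrite <- (csub_subK (u N) l). eapply Rle_trans; [apply cnorm_sub_le|].
  pose proof (HM N). pose proof (Rle_abs (cnorm (csub (u N) l))). lra.
Qed.

End Limits.

Section Neumann.
Context {A : CstarAlg}.
Implicit Types a b c x y : A.

Lemma csub_pseudometric : is_pseudometric (fun a b : A => cnorm (csub a b)).
Proof.
  split; [|split].
  - intro a. now rewrite csub_diag, cnorm_0.
  - apply cnorm_csub_sym.
  - intros a b c. rewrite <- (csub_tele a b c). apply cnorm_triangle.
Qed.

Lemma climit_ext (u v : nat -> A) l : (forall n, u n = v n) -> climit u l -> climit v l.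
Proof. intros Huv Hu eps He. destruct (Hu eps He) as [N HN]. exists N. intros n Hn. rewrite <- Huv. now apply HN. Qed.

Fixpoint gsum x n : A :=
  match n with O => czero | S k => cadd (gsum x k) (cpow x k) end.

Lemma gsum_mul_l x n : cmul (csub cone x) (gsum x n) = csub cone (cpow x n).
Proof.
  induction n; simpl; [now rewrite cmul_0r, csub_diag|].
  now rewrite cmul_addr, IHn, cmul_subl, cmul_1l, csub_tele.
Qed.

Lemma gsum_mul_r x n : cmul (gsum x n) (csub cone x) = csub cone (cpow x n).
Proof.
  induction n; simpl; [now rewrite cmul_0l, csub_diag|].
  now rewrite cmul_addl, IHn, cmul_subr, cmul_1r, cpow_comm, csub_tele.
Qed.

Lemma gsum_step x n : cnorm (csub (gsum x n) (gsum x (S n))) <= 1 * cnorm x ^ n.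
Proof.
  simpl. rewrite cnorm_csub_sym, csub_addl, csub_diag, cadd_0l, Rmult_1_l. apply cnorm_cpow.
Qed.

Lemma climit_one_sub_cpow x : cnorm x < 1 -> climit (fun n => csub cone (cpow x n)) cone.
Proof.
  intro Hx. apply (Un_cv_0_squeeze _ (fun n => 1 * cnorm x ^ n) (fun _ => 0));
    [|apply Un_cv_geometric; pose proof (cnorm_ge0 x); lra | apply Un_cv_const].
  intros n _. rewrite cnorm_csub_sym, csub_subK, Rplus_0_r, Rmult_1_l.
  split; [apply cnorm_ge0 | apply cnorm_cpow].
Qed.

Lemma neumann x : cnorm x < 1 ->
  exists w, cmul (csub cone x) w = cone /\ cmul w (csub cone x) = cone /\
            cnorm w <= 1 / (1 - cnorm x).
Proof.
  intro Hx. assert (Hr : 0 <= cnorm x < 1) by (pose proof (cnorm_ge0 x); lra).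
  pose proof (gsum_step x) as Hsteps.
  destruct (climit_of_cauchy (gsum x)
    (geometric_steps_cauchy _ _ csub_pseudometric _ _ _ Hr Hsteps)) as [l Hl].
  pose proof (climit_one_sub_cpow x Hx) as Hpow.
  exists l. split; [|split].
  - apply (climit_unique (fun n => cmul (csub cone x) (gsum x n))); [now apply climit_cmul_l|].
    exact (climit_ext _ _ _ (fun n => eq_sym (gsum_mul_l x n)) Hpow).
  - apply (climit_unique (fun n => cmul (gsum x n) (csub cone x))); [now apply climit_cmul_r|].
    exact (climit_ext _ _ _ (fun n => eq_sym (gsum_mul_r x n)) Hpow).
  - apply (climit_cnorm_le _ _ _ Hl). intro n.
    pose proof (geometric_steps_bound _ _ csub_pseudometric _ _ _ Hr Hsteps 0 n) as H.
    change (gsum x 0) with (@czero A) in H.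
    rewrite Nat.add_0_r, cnorm_csub_sym, csub_0r, pow_O, Rmult_1_r in H. exact H.
Qed.

End Neumann.

Section Perturbation.
Context {A : CstarAlg}.
Implicit Types a b c e g x y : A.

Lemma perturb_inverse a g e m :
  cmul a g = cone -> cmul g a = cone -> cnorm g <= m -> m * cnorm e < 1 ->
  exists h, cmul (csub a e) h = cone /\ cmul h (csub a e) = cone /\
            cnorm h <= m / (1 - m * cnorm e).
Proof.
  intros H1 H2 Hg Hm. pose proof (cnorm_ge0 g). pose proof (cnorm_ge0 e).
  assert (Hge : cnorm (cmul g e) <= m * cnorm e)
    by (eapply Rle_trans; [apply cnorm_mul | apply Rmult_le_compat_r; auto]).
  destruct (neumann (cmul g e)) as [w [W1 [W2 W3]]]; [lra|].
  assert (E : csub a e = cmul a (csub cone (cmul g e)))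
    by now rewrite cmul_subr, cmul_1r, cmul_assoc, H1, cmul_1l.
  exists (cmul w g). rewrite E. split; [|split].
  - now rewrite <- cmul_assoc, (cmul_assoc (csub cone (cmul g e))), W1, cmul_1l.
  - now rewrite <- cmul_assoc, (cmul_assoc g a), H2, cmul_1l.
  - eapply Rle_trans; [apply cnorm_mul|].
    assert (cnorm w <= 1 / (1 - m * cnorm e)).
    { eapply Rle_trans; [apply W3|]. apply Rmult_le_compat_l; [lra|]. apply Rinv_le_contravar; lra. }
    replace (m / (1 - m * cnorm e)) with (1 / (1 - m * cnorm e) * m) by (field; lra).
    apply Rmult_le_compat; auto using cnorm_ge0.
Qed.

Lemma resolvent_outside_disk l c : cnorm c < Cmod l ->
  exists h, cmul (csub (csmul l cone) c) h = cone /\ cmul h (csub (csmul l cone) c) = cone /\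
            cnorm h <= 1 / (Cmod l - cnorm c).
Proof.
  intro Hl. pose proof (cnorm_ge0 c).
  assert (Hz : l <> (0, 0)) by (intros ->; rewrite Cmod_0 in Hl; lra).
  pose proof (Cmod_pos l Hz).
  destruct (perturb_inverse (csmul l cone) (csmul (Cinv l) cone) c (/ Cmod l)) as [h [h1 [h2 h3]]].
  - now rewrite cmul_smull, cmul_smulr, <- csmul_mul, cmul_1l, Cmul_inv, csmul_1.
  - now rewrite cmul_smull, cmul_smulr, <- csmul_mul, cmul_1l, Cmul_comm, Cmul_inv, csmul_1.
  - eapply Rle_trans; [apply cnorm_smul_one|]. rewrite Cmod_inv; auto; lra.
  - apply (Rmult_lt_reg_l (Cmod l)); auto. rewrite <- Rmult_assoc, Rinv_r; lra.
  - exists h; repeat split; auto. eapply Rle_trans; [apply h3|]. right. field. split; lra.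
Qed.

End Perturbation.

(** * Rickart's estimate *)

Section InverseChoice.
Context {A : CstarAlg}.
Implicit Types x y : A.

Definition cinv (a : A) : A :=
  epsilon (inhabits czero) (fun g => cmul a g = cone /\ cmul g a = cone).

Lemma cinv_spec a : cinvertible a -> cmul a (cinv a) = cone /\ cmul (cinv a) a = cone.
Proof. apply (epsilon_spec (inhabits czero) (fun g => cmul a g = cone /\ cmul g a = cone)). Qed.

Lemma cmul_one_sub_add y : cmul (csub cone y) (cadd cone y) = csub (@cone A) (cmul y y).
Proof. now rewrite cmul_subl, cmul_1l, cmul_addr, cmul_1r, csub_add_mid. Qed.

Lemma cmul_one_add_sub y : cmul (cadd cone y) (csub cone y) = csub (@cone A) (cmul y y).
Proof.
  now rewrite cmul_addl, cmul_1l, cmul_subr, cmul_1r, csub_tele.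
Qed.

Lemma cadd_one_add_sub y : cadd (cadd cone y) (csub cone y) = csmul (Cmk 2) (@cone A).
Proof. now rewrite <- cadd_diag, <- cadd_assoc, (cadd_comm y), csub_addK. Qed.

Lemma cpow_smul_zeta j l (k : A) :
  cpow (csmul (Cmul (zeta j) l) k) (2 ^ j) = copp (cpow (csmul l k) (2 ^ j)).
Proof. now rewrite !cpow_smul, Cpow_mul, zeta_pow, csmul_mul, csmul_m1. Qed.

(** Conjugating [X - Y] by [1 - y] and [1 + y] yields [2 y]. *)
Lemma inverses_one_pm_gap y X Y : cnorm y = 1 ->
  cmul (csub cone y) X = cone -> cmul Y (cadd cone y) = cone -> 1 / 2 <= cnorm (csub X Y).
Proof.
  intros Hy HX HY.
  assert (E : cmul (cmul (csub cone y) (csub X Y)) (cadd cone y) = cadd y y).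
  { rewrite cmul_subr, HX, cmul_subl, cmul_1l, <- cmul_assoc, HY, cmul_1r.
    rewrite <- (csub_opp cone y), csub_sub2l. apply csub_opp. }
  assert (N2 : cnorm (cadd y y) = 2) by (rewrite cadd_diag, cnorm_smul, Cmod_mk, Hy, Rabs_right; lra).
  assert (A1 : cnorm (csub cone y) <= 2) by (pose proof (cnorm_sub_le cone y); pose proof (@cnorm_one A); lra).
  assert (A2 : cnorm (cadd cone y) <= 2) by (pose proof (cnorm_triangle cone y); pose proof (@cnorm_one A); lra).
  pose proof (cnorm_mul (cmul (csub cone y) (csub X Y)) (cadd cone y)) as N1.
  pose proof (cnorm_mul (csub cone y) (csub X Y)) as N3.
  rewrite E, N2 in N1. pose proof (cnorm_ge0 (csub X Y)). pose proof (cnorm_ge0 (csub cone y)).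
  pose proof (cnorm_ge0 (cadd cone y)). pose proof (cnorm_ge0 (cmul (csub cone y) (csub X Y))). nra.
Qed.

End InverseChoice.

Section Rickart.
Context {A : CstarAlg}.
Variable k : A.
Variables r0 r1 : R.
Hypothesis Hr0 : 0 < r0.
Hypothesis Hr01 : r0 < r1.
Hypothesis Hinv : forall l, Cmod l <= r1 -> cinvertible (csub cone (csmul l k)).

Definition resolvent (l : C) : A := cinv (csub cone (csmul l k)).

Lemma resolvent_spec l : Cmod l <= r1 ->
  cmul (csub cone (csmul l k)) (resolvent l) = cone /\
  cmul (resolvent l) (csub cone (csmul l k)) = cone.
Proof. intro H. apply cinv_spec, Hinv, H. Qed.

Lemma resolvent_near l m : Cmod l <= r1 -> Cmod m <= r1 ->
  2 * (Cmod (Csub l m) * cnorm k) * cnorm (resolvent m) <= 1 ->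
  cnorm (resolvent l) <= 2 * cnorm (resolvent m).
Proof.
  intros Hl Hm Hclose. pose proof (cnorm_ge0 (resolvent m)).
  set (g := cnorm (resolvent m)) in *.
  set (e := csmul (Csub l m) k). assert (He : cnorm e = Cmod (Csub l m) * cnorm k) by apply cnorm_smul.
  rewrite <- He in Hclose. pose proof (cnorm_ge0 e).
  destruct (resolvent_spec m Hm) as [F1 F2].
  destruct (perturb_inverse _ _ e g F1 F2 (Rle_refl _)) as [h [h1 [h2 h3]]]; [nra|].
  assert (E : csub (csub cone (csmul m k)) e = csub cone (csmul l k))
    by (unfold e; now rewrite csmul_subl, csub_sub2r).
  rewrite E in h1, h2. destruct (resolvent_spec l Hl) as [G1 _].
  rewrite (cinv_unique _ _ _ G1 h2). eapply Rle_trans; [apply h3|].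
  apply (Rmult_le_reg_r (1 - g * cnorm e)); [nra|].
  unfold Rdiv. rewrite Rmult_assoc, Rinv_l by nra. nra.
Qed.

Lemma resolvent_bounded : exists M, 0 < M /\ forall l, Cmod l <= r0 -> cnorm (resolvent l) <= M.
Proof.
  set (K := cnorm k + 1). assert (HK : 1 <= K) by (pose proof (cnorm_ge0 k); unfold K; lra).
  assert (Hpos : forall u v, 0 < Rmin ((r1 - r0) / 4) (/ (4 * cnorm (resolvent (u, v)) * K + 4))).
  { intros u v. pose proof (cnorm_ge0 (resolvent (u, v))).
    apply Rmin_pos; [lra | apply Rinv_0_lt_compat; nra]. }
  destruct (Compactness.compactness_value_2d (-r0) r0 (-r0) r0 (fun u v => mkposreal _ (Hpos u v)))
    as [d Hd].
  pose proof (cond_pos d) as Hd0.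
  exists (/ (2 * d * K)). split; [apply Rinv_0_lt_compat; nra|].
  intros [x1 x2] Hl.
  assert (B1 : -r0 <= x1 <= r0) by (pose proof (Cmod_fst_bound x1 x2); lra).
  assert (B2 : -r0 <= x2 <= r0) by (pose proof (Cmod_snd_bound x1 x2); lra).
  apply NNPP. intro Hn. apply (Hd x1 x2 B1 B2). intros (u & v & _ & _ & H1 & H2 & H3). apply Hn.
  simpl in H1, H2, H3.
  set (g := cnorm (resolvent (u, v))) in *.
  set (dl := Rmin ((r1 - r0) / 4) (/ (4 * g * K + 4))) in *.
  assert (Hg : 0 <= g) by apply cnorm_ge0.
  assert (Hdl1 : dl <= (r1 - r0) / 4) by apply Rmin_l.
  assert (Hdl2 : dl * (4 * g * K + 4) <= 1).
  { pose proof (Rmin_r ((r1 - r0) / 4) (/ (4 * g * K + 4))) as Hr. fold dl in Hr.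
    apply (Rmult_le_compat_r (4 * g * K + 4)) in Hr; [|nra]. rewrite Rinv_l in Hr; nra. }
  pose proof (Cmod_sub_lt _ _ _ _ _ H1 H2) as Hdist. fold dl in Hdist.
  assert (Huv : Cmod (u, v) <= r1).
  { replace (u, v) with (Cadd (x1, x2) (Copp (Csub (x1, x2) (u, v))))
      by (unfold Cadd, Copp, Csub; simpl; apply Cpair_eq; ring).
    eapply Rle_trans; [apply Cmod_triangle|].
    replace (Cmod (Copp (Csub (x1, x2) (u, v)))) with (Cmod (Csub (x1, x2) (u, v)))
      by (unfold Cmod, Copp; simpl; f_equal; ring).
    lra. }
  eapply Rle_trans; [apply resolvent_near; [lra | exact Huv |]|].
  - assert (Hek : Cmod (Csub (x1, x2) (u, v)) * cnorm k <= 2 * dl * K).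
    { apply Rmult_le_compat; [apply Cmod_ge0 | apply cnorm_ge0 | lra | unfold K; lra]. }
    fold g. apply (Rmult_le_compat_r g) in Hek; [|exact Hg]. nra.
  - fold g. apply (Rmult_le_reg_r (2 * d * K)); [nra|].
    rewrite Rinv_l by nra. nra.
Qed.

Lemma resolvent_identity l m : Cmod l <= r1 -> Cmod m <= r1 ->
  csub (resolvent l) (resolvent m) = cmul (resolvent l) (cmul (csmul (Csub l m) k) (resolvent m)).
Proof.
  intros Hl Hm. destruct (resolvent_spec l Hl) as [_ Fl]. destruct (resolvent_spec m Hm) as [Fm _].
  rewrite csmul_subl, <- (csub_sub2l (csmul l k) (csmul m k) cone).
  now rewrite cmul_subl, cmul_subr, Fm, cmul_1r, cmul_assoc, Fl, cmul_1l.
Qed.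

Lemma resolvent_lipschitz : exists L, 0 <= L /\ forall l m, Cmod l <= r0 -> Cmod m <= r0 ->
  cnorm (csub (resolvent l) (resolvent m)) <= L * Cmod (Csub l m).
Proof.
  destruct resolvent_bounded as [M [HM0 HM]]. exists (M * M * cnorm k).
  pose proof (cnorm_ge0 k). split; [nra|]. intros l m Hl Hm.
  rewrite resolvent_identity by lra.
  eapply Rle_trans; [apply cnorm_mul3|]. rewrite cnorm_smul.
  pose proof (HM l Hl). pose proof (HM m Hm). pose proof (cnorm_ge0 (resolvent l)).
  pose proof (cnorm_ge0 (resolvent m)). pose proof (Cmod_ge0 (Csub l m)).
  replace (M * M * cnorm k * Cmod (Csub l m)) with (M * (Cmod (Csub l m) * cnorm k) * M) by ring.
  apply Rmult_le_compat; auto; [apply Rmult_le_pos; auto; apply Rmult_le_pos; auto|].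
  apply Rmult_le_compat_r; auto. apply Rmult_le_pos; auto.
Qed.

(** [inv_pow2 j l] inverts [1 - (l k)^(2^j)]: writing [y = (l k)^(2^i)], one has
    [1 - y^2 = (1 - y) (1 + y)] and [1 + y = 1 - ((zeta i * l) k)^(2^i)]. *)
Fixpoint inv_pow2 (j : nat) (l : C) : A :=
  match j with
  | O => resolvent l
  | S i => csmul (Cmk (1 / 2)) (cadd (inv_pow2 i l) (inv_pow2 i (Cmul (zeta i) l)))
  end.

Lemma inv_pow2_spec j : forall l, Cmod l <= r0 ->
  cmul (csub cone (cpow (csmul l k) (2 ^ j))) (inv_pow2 j l) = cone /\
  cmul (inv_pow2 j l) (csub cone (cpow (csmul l k) (2 ^ j))) = cone.
Proof.
  induction j as [|j IH]; intros l Hl.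
  - simpl inv_pow2. rewrite Nat.pow_0_r, cpow_1. apply resolvent_spec. lra.
  - destruct (IH l Hl) as [X1 X2].
    destruct (IH (Cmul (zeta j) l)) as [Y1 Y2]; [now rewrite Cmod_zeta_mul|].
    rewrite cpow_smul_zeta, csub_opp in Y1, Y2.
    simpl inv_pow2. replace (2 ^ S j)%nat with (2 ^ j + 2 ^ j)%nat by (simpl; lia).
    rewrite cpow_add.
    set (y := cpow (csmul l k) (2 ^ j)) in *.
    set (X := inv_pow2 j l) in *. set (Y := inv_pow2 j (Cmul (zeta j) l)) in *.
    split.
    + rewrite cmul_smulr, cmul_addr.
      rewrite <- (cmul_one_add_sub y) at 1. rewrite <- cmul_assoc, X1, cmul_1r.
      rewrite <- cmul_one_sub_add, <- cmul_assoc, Y1, cmul_1r.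
      now rewrite cadd_one_add_sub, csmul_half_2.
    + rewrite cmul_smull, cmul_addl.
      rewrite <- (cmul_one_sub_add y) at 1. rewrite cmul_assoc, X2, cmul_1l.
      rewrite <- cmul_one_add_sub, cmul_assoc, Y2, cmul_1l.
      now rewrite cadd_one_add_sub, csmul_half_2.
Qed.

Lemma inv_pow2_lipschitz L :
  (forall l m, Cmod l <= r0 -> Cmod m <= r0 ->
     cnorm (csub (resolvent l) (resolvent m)) <= L * Cmod (Csub l m)) ->
  forall j l m, Cmod l <= r0 -> Cmod m <= r0 ->
    cnorm (csub (inv_pow2 j l) (inv_pow2 j m)) <= L * Cmod (Csub l m).
Proof.
  intros HL j. induction j as [|j IH]; intros l m Hl Hm; [now apply HL|].
  simpl inv_pow2. rewrite <- csmul_subr, csub_add2, cnorm_smul, Cmod_mk, Rabs_right by lra.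
  pose proof (IH l m Hl Hm).
  pose proof (IH (Cmul (zeta j) l) (Cmul (zeta j) m)) as H2.
  rewrite Csub_mul_l, !Cmod_zeta_mul in H2. specialize (H2 Hl Hm).
  pose proof (cnorm_triangle (csub (inv_pow2 j l) (inv_pow2 j m))
    (csub (inv_pow2 j (Cmul (zeta j) l)) (inv_pow2 j (Cmul (zeta j) m)))).
  lra.
Qed.

Lemma rickart_bound : cstar k = k -> r0 * cnorm k < 1.
Proof.
  intro Hk. destruct resolvent_lipschitz as [L [HL0 HL]].
  destruct (Rlt_or_le (r0 * cnorm k) 1) as [|Hge]; auto. exfalso.
  assert (Hk0 : 0 < cnorm k) by (destruct (cnorm_ge0 k) as [|E]; auto; rewrite <- E in Hge; lra).
  destruct (exists_zeta_near_1 (1 / (2 * (L * r0 + 1)))) as [j Hz]; [apply Rdiv_lt_0_compat; nra|].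
  set (l0 := Cmk (/ cnorm k)).
  assert (Hl0 : Cmod l0 <= r0).
  { unfold l0. rewrite Cmod_mk, Rabs_right by (left; apply Rinv_0_lt_compat; auto).
    apply (Rmult_le_reg_r (cnorm k)); auto. rewrite Rinv_l; lra. }
  destruct (inv_pow2_spec j l0 Hl0) as [X1 _].
  destruct (inv_pow2_spec j (Cmul (zeta j) l0)) as [_ Y2]; [now rewrite Cmod_zeta_mul|].
  rewrite cpow_smul_zeta, csub_opp in Y2.
  assert (Hy : cnorm (cpow (csmul l0 k) (2 ^ j)) = 1).
  { unfold l0. rewrite cpow_smul, cnorm_smul, (proj2 (cnorm_cpow2_sa k j Hk)), Cpow_mk, Cmod_mk.
    rewrite Rabs_right by (apply Rle_ge, pow_le; left; apply Rinv_0_lt_compat; auto).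
    rewrite <- Rpow_mult_distr, Rinv_l, pow1; lra. }
  pose proof (inverses_one_pm_gap _ _ _ Hy X1 Y2) as Hgap.
  pose proof (inv_pow2_lipschitz L HL j l0 (Cmul (zeta j) l0) Hl0) as Hlip.
  rewrite Cmod_zeta_mul, Csub_mul_r, Cmod_mul in Hlip. specialize (Hlip Hl0).
  pose proof (Cmod_ge0 (Csub C1 (zeta j))).
  assert (L * (Cmod (Csub C1 (zeta j)) * Cmod l0) <= L * r0 * Cmod (Csub C1 (zeta j))).
  { replace (L * r0 * Cmod (Csub C1 (zeta j))) with (L * (Cmod (Csub C1 (zeta j)) * r0)) by ring.
    apply Rmult_le_compat_l, Rmult_le_compat_l; auto. }
  assert (L * r0 * Cmod (Csub C1 (zeta j)) < 1 / 2).
  { apply Rle_lt_trans with (L * r0 * (1 / (2 * (L * r0 + 1)))); [nra|].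
    apply (Rmult_lt_reg_r (2 * (L * r0 + 1))); [nra|]. field_simplify; nra. }
  lra.
Qed.

End Rickart.

(** * Norms of positive elements *)

Section Positive.
Context {A : CstarAlg}.
Implicit Types a b c h : A.

Lemma cnorm_sa_le_spectral_bound h rho : cstar h = h -> 0 <= rho ->
  (forall mu : C, Cmod mu > rho -> cinvertible (csub h (csmul mu cone))) -> cnorm h <= rho.
Proof.
  intros Hh Hr Hs. destruct (Rle_or_lt (cnorm h) rho) as [|H]; auto. exfalso.
  set (n := cnorm h) in *.
  assert (Hinv : forall l, Cmod l <= 2 / (n + rho) -> cinvertible (csub cone (csmul l h))).
  { intros l Hl. destruct (classic (l = (0, 0))) as [->|E].
    - rewrite csmul_0l, csub_0r. apply cinvertible_one.
    - pose proof (Cmod_pos l E).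
      assert (Hm : Cmod (Cinv l) > rho).
      { rewrite Cmod_inv by auto. apply (Rmult_lt_reg_r (Cmod l)); auto. rewrite Rinv_l by lra.
        apply (Rmult_le_compat_r (n + rho)) in Hl; [|lra].
        unfold Rdiv in Hl. rewrite Rmult_assoc, Rinv_l in Hl; nra. }
      assert (E2 : csub cone (csmul l h) = csmul (Copp l) (csub h (csmul (Cinv l) cone))).
      { rewrite csmul_subr, <- csmul_mul.
        replace (Cmul (Copp l) (Cinv l)) with (Copp C1).
        - now rewrite !csmul_oppl, csmul_1, csub_opp2.
        - rewrite <- (Cmul_inv l E). destruct l, (Cinv (r, r0)).
          unfold Cmul, Copp; simpl; apply Cpair_eq; ring. }
      rewrite E2. apply cinvertible_smul; [|now apply Hs].
      intro E3. apply E. destruct l; unfold Copp in E3; simpl in E3. injection E3; intros.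
      apply Cpair_eq; lra. }
  pose proof (rickart_bound h (/ n) (2 / (n + rho)) ltac:(apply Rinv_0_lt_compat; lra)
                ltac:(apply (Rmult_lt_reg_r (n * (n + rho))); [nra | field_simplify; nra]) Hinv Hh).
  fold n in H0. rewrite Rinv_l in H0; lra.
Qed.

Lemma cpos_invertible a l : cpos a -> ~ (snd l = 0 /\ 0 <= fst l) ->
  cinvertible (csub a (csmul l cone)).
Proof. intros [_ Hp] Hl. apply NNPP. intro Hn. exact (Hl (Hp l Hn)). Qed.

(** The spectrum of [|c| - c] lies in [[0, |c|]]. *)
Lemma cnorm_shift_cpos c : cpos c -> cnorm (csub (csmul (Cmk (cnorm c)) cone) c) <= cnorm c.
Proof.
  intro Hc. set (s := cnorm c). assert (Hs : 0 <= s) by apply cnorm_ge0.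
  apply cnorm_sa_le_spectral_bound; auto.
  - now rewrite cstar_sub, cstar_real, (proj1 Hc).
  - intros mu Hmu. set (l := Csub (Cmk s) mu).
    assert (E : csub (csub (csmul (Cmk s) cone) c) (csmul mu cone) = copp (csub c (csmul l cone)))
      by (unfold l; now rewrite csmul_subl, copp_csub, csub_swap).
    rewrite E. apply cinvertible_opp.
    destruct (classic (snd l = 0 /\ 0 <= fst l)) as [[H1 H2]|H]; [|now apply cpos_invertible].
    destruct mu as [m1 m2]. unfold l, Csub, Cadd, Copp, Cmk in H1, H2; simpl in H1, H2.
    assert (m2 = 0) by lra. subst m2. change (m1, 0) with (Cmk m1) in Hmu. rewrite Cmod_mk in Hmu.
    assert (m1 < - s)
      by (destruct (Rcase_abs m1); [rewrite Rabs_left in Hmu | rewrite Rabs_right in Hmu]; lra).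
    destruct (resolvent_outside_disk l c) as [g [g1 [g2 _]]].
    { unfold l, Csub, Cadd, Copp, Cmk; simpl. rewrite Rplus_0_l, Ropp_0.
      change (s + - m1, 0) with (Cmk (s + - m1)). rewrite Cmod_mk, Rabs_right; fold s; lra. }
    exists (copp g). rewrite <- copp_csub, cmul_oppl, cmul_oppr, copp_opp, cmul_oppr, cmul_oppl, copp_opp.
    auto.
Qed.

Lemma cnorm_le_of_cle a b : cpos a -> cle a b -> cnorm a <= cnorm b.
Proof.
  intros Ha Hba. apply cnorm_sa_le_spectral_bound; [apply Ha | apply cnorm_ge0 |].
  intros mu Hmu. destruct (classic (snd mu = 0 /\ 0 <= fst mu)) as [[H1 H2]|H];
    [|now apply cpos_invertible].
  destruct mu as [m1 m2]. simpl in H1, H2. subst m2.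
  change (m1, 0) with (Cmk m1) in Hmu. rewrite Cmod_mk, Rabs_right in Hmu by lra.
  set (c := csub b a). set (s := cnorm c).
  pose proof (cnorm_shift_cpos c Hba) as HY. fold s in HY.
  assert (Hs : 0 <= s) by apply cnorm_ge0. pose proof (cnorm_ge0 b).
  destruct (resolvent_outside_disk (Cmk (m1 + s)) b) as [g [g1 [g2 g3]]];
    [rewrite Cmod_mk, Rabs_right; lra|].
  rewrite Cmod_mk, Rabs_right in g3 by lra.
  destruct (perturb_inverse _ _ (csub (csmul (Cmk s) cone) c) (1 / (m1 + s - cnorm b)) g1 g2 g3)
    as [h [h1 [h2 _]]].
  { apply (Rmult_lt_reg_r (m1 + s - cnorm b)); [lra|].
    replace (1 / (m1 + s - cnorm b) * cnorm (csub (csmul (Cmk s) cone) c) * (m1 + s - cnorm b))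
      with (cnorm (csub (csmul (Cmk s) cone) c)) by (field; lra). lra. }
  assert (E : csub (csub (csmul (Cmk (m1 + s)) cone) b) (csub (csmul (Cmk s) cone) c)
              = csub (csmul (m1, 0) cone) a).
  { replace (Cmk (m1 + s)) with (Cadd (Cmk m1) (Cmk s))
      by (unfold Cadd, Cmk; simpl; apply Cpair_eq; ring).
    rewrite csmul_addl. apply csub_add_sub_sub. }
  rewrite E in h1, h2. rewrite <- copp_csub. apply cinvertible_opp. exists h; auto.
Qed.

End Positive.

(** * Common fixed points in C*-algebra valued metric spaces *)

Section CstarMetric.
Context {A : CstarAlg} {X : Type} (d : X -> X -> A).
Hypothesis Hd : is_cmetric A X d.

Lemma cmetric_norm_pseudometric : is_pseudometric (fun x y => cnorm (d x y)).
Proof.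
  destruct Hd as (Hpos & Heq & Hsym & Htri). split; [|split].
  - intro x. now rewrite (proj2 (Heq x x) eq_refl), cnorm_0.
  - intros x y. now rewrite Hsym.
  - intros x y z. eapply Rle_trans; [apply (cnorm_le_of_cle _ _ (Hpos x z) (Htri x z y))|].
    apply cnorm_triangle.
Qed.

Lemma cmetric_eq_of_cnorm0 x y : cnorm (d x y) = 0 -> x = y.
Proof. intro H. apply (proj2 Hd), cnorm_eq0, H. Qed.

Lemma cmetric_limit_near (v w : nat -> X) u :
  Un_cv (fun n => cnorm (d (w n) u)) 0 -> Un_cv (fun n => cnorm (d (v n) (w n))) 0 ->
  Un_cv (fun n => cnorm (d (v n) u)) 0.
Proof.
  intros Hw Hvw. destruct cmetric_norm_pseudometric as (_ & _ & Htri).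
  assert (Hle : forall n, (1 <= n)%nat ->
    0 <= cnorm (d (v n) u) <= cnorm (d (v n) (w n)) + cnorm (d (w n) u))
    by (intros n _; split; [apply cnorm_ge0 | apply Htri]).
  exact (Un_cv_0_squeeze _ _ _ Hle Hvw Hw).
Qed.

Lemma cmetric_limit_unique (w : nat -> X) a b :
  Un_cv (fun n => cnorm (d (w n) a)) 0 -> Un_cv (fun n => cnorm (d (w n) b)) 0 -> a = b.
Proof.
  intros Ha Hb. apply cmetric_eq_of_cnorm0, (Un_cv_0_bound_eq0 _ _ (Un_cv_0_plus _ _ Ha Hb)).
  destruct cmetric_norm_pseudometric as (_ & Hsym & Htri).
  intros n _. split; [apply cnorm_ge0|]. rewrite (Hsym (w n) a). apply Htri.
Qed.

Lemma orbit_limit_fixed f x u : orbitally_continuous d f ->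
  Un_cv (fun n => cnorm (d (Nat.iter n f x) u)) 0 -> f u = u.
Proof.
  intros Hf Hu.
  apply (cmetric_limit_unique (fun n => Nat.iter (S n) f x)); [|exact (Un_cv_shift _ _ Hu)].
  exact (Hf u x (fun n => n) (fun n => Nat.lt_succ_diag_r n) Hu).
Qed.

Lemma iter_fixed (f : X -> X) u n : f u = u -> Nat.iter n f u = u.
Proof. intro Hu. induction n as [|n IH]; simpl; [reflexivity | now rewrite IH]. Qed.

Definition geometrically_close (f g : X -> X) : Prop :=
  forall x y, exists c r, 0 <= c /\ 0 <= r < 1 /\
    forall n, (1 <= n)%nat -> cnorm (d (Nat.iter n f x) (Nat.iter n g y)) <= c * r ^ n.

Lemma geometrically_close_of_cle (f g : X -> X) (q delta : X -> X -> A) :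
  (forall x y, cnorm (q x y) < 1) ->
  (forall x y n, (1 <= n)%nat ->
     cle (d (Nat.iter n f x) (Nat.iter n g y)) (cmul (cpow (q x y) n) (delta x y))) ->
  geometrically_close f g.
Proof.
  intros Hq Hcontr x y. exists (cnorm (delta x y)), (cnorm (q x y)).
  split; [apply cnorm_ge0 | split; [split; [apply cnorm_ge0 | apply Hq]|]].
  intros n Hn. eapply Rle_trans; [apply (cnorm_le_of_cle _ _ (proj1 Hd _ _) (Hcontr x y n Hn))|].
  eapply Rle_trans; [apply cnorm_mul|]. rewrite (Rmult_comm (cnorm (delta x y))).
  apply Rmult_le_compat_r; [apply cnorm_ge0 | apply cnorm_cpow].
Qed.

Section Close.
Variables f g : X -> X.
Hypothesis Hfg : geometrically_close f g.

Lemma geometrically_close_fixed_unique u v : f u = u -> g v = v -> u = v.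
Proof.
  intros Hu Hv. destruct (Hfg u v) as (c & r & _ & Hr & Hn).
  apply cmetric_eq_of_cnorm0, (Un_cv_0_bound_eq0 _ _ (Un_cv_geometric c r Hr)).
  intros n Hn1. split; [apply cnorm_ge0|]. specialize (Hn n Hn1).
  now rewrite (iter_fixed f u n Hu), (iter_fixed g v n Hv) in Hn.
Qed.

Lemma orbits_close x y : Un_cv (fun n => cnorm (d (Nat.iter n g y) (Nat.iter n f x))) 0.
Proof.
  destruct (Hfg x y) as (c & r & _ & Hr & Hn).
  destruct cmetric_norm_pseudometric as (_ & Hsym & _).
  assert (Hle : forall n, (1 <= n)%nat ->
    0 <= cnorm (d (Nat.iter n g y) (Nat.iter n f x)) <= c * r ^ n + 0)
    by (intros n Hn1; rewrite Hsym, Rplus_0_r; split; [apply cnorm_ge0 | now apply Hn]).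
  exact (Un_cv_0_squeeze _ _ _ Hle (Un_cv_geometric c r Hr) (Un_cv_const 0)).
Qed.

Lemma orbit_steps_geometric x : exists C r, 0 <= r < 1 /\
  forall n, cnorm (d (Nat.iter n f x) (Nat.iter (S n) f x)) <= C * r ^ n.
Proof.
  destruct (Hfg x x) as (c1 & r1 & Hc1 & Hr1 & H1).
  destruct (Hfg (f x) x) as (c2 & r2 & Hc2 & Hr2 & H2).
  destruct cmetric_norm_pseudometric as (_ & Hsym & Htri).
  set (r := Rmax r1 r2). set (c0 := cnorm (d x (f x))).
  exists (c1 + c2 + c0), r. split; [unfold r, Rmax; destruct Rle_dec; lra|].
  assert (Hc0 : 0 <= c0) by apply cnorm_ge0.
  intros [|n]; [simpl; fold c0; lra|].
  eapply Rle_trans; [apply (Htri _ (Nat.iter (S n) g x))|].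
  rewrite (Hsym _ (Nat.iter (S (S n)) f x)), (Nat.iter_succ_r (S n) _ f x).
  pose proof (H1 (S n) ltac:(lia)). pose proof (H2 (S n) ltac:(lia)).
  pose proof (geometric_le c1 r1 r (S n) Hc1 (conj (proj1 Hr1) (Rmax_l r1 r2))).
  pose proof (geometric_le c2 r2 r (S n) Hc2 (conj (proj1 Hr2) (Rmax_r r1 r2))).
  pose proof (pow_le r (S n) ltac:(unfold r, Rmax; destruct Rle_dec; lra)).
  assert (0 <= c0 * r ^ S n) by (apply Rmult_le_pos; auto). nra.
Qed.

Theorem geometrically_close_common_fixed_point :
  inhabited X -> cm_complete d -> orbitally_continuous d f -> orbitally_continuous d g ->
  exists u, f u = u /\ g u = u /\ forall v, f v = v -> g v = v -> v = u.
Proof.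
  intros [x] Hcomp Hf Hg.
  destruct (orbit_steps_geometric x) as (C & r & Hr & Hsteps).
  destruct (Hcomp _ (geometric_steps_cauchy _ _ cmetric_norm_pseudometric _ _ _ Hr Hsteps))
    as [u Hu].
  assert (Hfu : f u = u) by exact (orbit_limit_fixed f x u Hf Hu).
  assert (Hgu : g u = u)
    by exact (orbit_limit_fixed g x u Hg (cmetric_limit_near _ _ u Hu (orbits_close x x))).
  exists u. split; [exact Hfu | split; [exact Hgu|]].
  intros v _ Hgv. symmetry. exact (geometrically_close_fixed_unique u v Hfu Hgv).
Qed.

End Close.
End CstarMetric.

Theorem corollary3p21 (A : CstarAlg) (X : Type) (d : X -> X -> A)
  (HX : inhabited X) (Hd : is_cmetric A X d) (Hcomp : cm_complete d)
  (T S : X -> X) (q : X -> X -> A) (delta : X -> X -> A)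
  (Hq : forall x y, cpos_central (q x y) /\ 0 <= cnorm (q x y) < 1)
  (Hdelta : forall x y, cpos (delta x y))
  (Hcontr : forall (x y : X) (n : nat), (1 <= n)%nat ->
     cle (d (Nat.iter n T x) (Nat.iter n (fun z => S (T z)) y))
         (cmul (cpow (q x y) n) (delta x y)))
  (HT : orbitally_continuous d T)
  (HST : orbitally_continuous d (fun z => S (T z))) :
  exists u : X, T u = u /\ S u = u /\
    (forall v : X, T v = v -> S v = v -> v = u).
Proof.
  assert (Hclose : geometrically_close d T (fun z => S (T z)))
    by (apply (geometrically_close_of_cle d Hd _ _ q delta); [apply Hq | exact Hcontr]).
  destruct (geometrically_close_common_fixed_point d Hd _ _ Hclose HX Hcomp HT HST)
    as (u & HTu & HSTu & Huniq).
  exists u. split; [exact HTu | split].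
  - now rewrite HTu in HSTu.
  - intros v HTv HSv. apply Huniq; [exact HTv | now rewrite HTv].
Qed.
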